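(* Let $P$ be a countable unital left cancellative semigroup, let $S$ be the inverse semigroup $\{v_{p_1}^*v_{q_1}\cdots v_{p_n}^*v_{q_n}: n\ge1,\ p_i,q_i\in P\}\cup\{0\}$ in $C^*(P)$ with idempotent semilattice $E=\{e_X:X\in\mathcal{J}(P)\}$, and let $\widehat{E}$ be the spectrum of $E$. Let $s\in S$ and let $\phi\in\widehat{E}$ be such that for all $X,Y\in\mathcal{J}(P)$ with $X\cup Y\in\mathcal{J}(P)$ one has $\phi(e_{X\cup Y})=\phi(e_X)+\phi(e_Y)-\phi(e_{X\cap Y})$. Then for all $X,Y\in\mathcal{J}(P)$ with $X\cup Y\in\mathcal{J}(P)$, $$\phi(s^*e_{X\cup Y}s)=\phi(s^*e_Xs)+\phi(s^*e_Ys)-\phi(s^*e_{X\cap Y}s).$$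
   Context: For $p\in P$, $pX$ is the image of $X\subseteq P$ under $q\mapsto pq$ and $p^{-1}X=\{q\in P:pq\in X\}$. The constructible right ideals are $\mathcal{J}(P)=\{p_1^{-1}q_1\cdots p_n^{-1}q_nP: n\ge1,\ p_i,q_i\in P\}\cup\{\emptyset\}$. $C^*(P)$ is the universal unital C*-algebra generated by isometries $\{v_p\}_{p\in P}$ and projections $\{e_X\}_{X\in\mathcal{J}(P)}$ with $v_pv_q=v_{pq}$, $v_pe_Xv_p^*=e_{pX}$, $e_\emptyset=0$, $e_P=1$, and $e_Xe_Y=e_{X\cap Y}$. Note $s^*es\in E$ for $s\in S$, $e\in E$. The spectrum $\widehat{E}$ is the set of nonzero maps $\phi:E\to\{0,1\}$ with $\phi(0)=0$ and $\phi(ef)=\phi(e)\phi(f)$. *)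

From HB Require Import structures.
From mathcomp Require Import all_boot all_algebra.
From mathcomp Require Import boolp classical_sets.
Set Implicit Arguments. Unset Strict Implicit. Unset Printing Implicit Defensive.
Import GRing.Theory.
Local Open Scope classical_set_scope.
Local Open Scope ring_scope.

Definition unital_left_cancellative (P : Type) (mul : P -> P -> P) (one : P) : Prop :=
  (forall a b c, mul a (mul b c) = mul (mul a b) c) /\
  (forall a, mul one a = a) /\ (forall a, mul a one = a) /\
  (forall a b c, mul a b = mul a c -> b = c).

Definition limg (P : Type) (mul : P -> P -> P) (p : P) (X : set P) : set P :=
  [set mul p x | x in X].
Definition lpre (P : Type) (mul : P -> P -> P) (p : P) (X : set P) : set P :=
  [set q | X (mul p q)].

(* For w = [:: (p1,q1); ...; (pn,qn)], the set p1^{-1} q1 ... pn^{-1} qn P. *)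
Fixpoint word_ideal (P : Type) (mul : P -> P -> P) (w : seq (P * P)) : set P :=
  match w with
  | [::] => setT
  | (p, q) :: w' => lpre mul p (limg mul q (word_ideal mul w'))
  end.

Definition constructible (P : Type) (mul : P -> P -> P) (X : set P) : Prop :=
  X = set0 \/ exists w : seq (P * P), w <> [::] /\ X = word_ideal mul w.

(* A ring R with an involution star (a *-ring), together with isometries v_p
   and projections e_X (X \in J(P)) satisfying the defining relations of C*(P). *)
Definition Cstar_P_relations (P : Type) (mul : P -> P -> P) (R : nzRingType)
  (star : R -> R) (v : P -> R) (e : set P -> R) : Prop :=
  (forall x y, star (x * y) = star y * star x) /\
  (forall x, star (star x) = x) /\
  (forall x y, star (x + y) = star x + star y) /\
  (forall p, star (v p) * v p = 1) /\
  (forall p q, v (mul p q) = v p * v q) /\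
  (forall X, constructible mul X -> star (e X) = e X) /\
  (forall p X, constructible mul X -> v p * e X * star (v p) = e (limg mul p X)) /\
  e set0 = 0 /\ e setT = 1 /\
  (forall X Y, constructible mul X -> constructible mul Y ->
     e X * e Y = e (X `&` Y)).

Fixpoint word_elt (P : Type) (R : nzRingType) (star : R -> R) (v : P -> R)
  (w : seq (P * P)) : R :=
  match w with
  | [::] => 1
  | (p, q) :: w' => star (v p) * v q * word_elt star v w'
  end.

Definition in_S (P : Type) (R : nzRingType) (star : R -> R) (v : P -> R) (s : R) : Prop :=
  s = 0 \/ exists w : seq (P * P), w <> [::] /\ s = word_elt star v w.

Definition in_E (P : Type) (mul : P -> P -> P) (R : nzRingType) (e : set P -> R) (x : R) : Prop :=
  exists X, constructible mul X /\ x = e X.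

(* phi \in \hat E : phi restricted to E is a nonzero multiplicative {0,1}-valued map
   with phi(0) = 0 (values of phi outside E are irrelevant). *)
Definition in_spectrum (P : Type) (mul : P -> P -> P) (R : nzRingType) (e : set P -> R)
  (phi : R -> int) : Prop :=
  [/\ (forall x, in_E mul e x -> phi x = 0 \/ phi x = 1),
      phi 0 = 0,
      (forall x y, in_E mul e x -> in_E mul e y -> phi (x * y) = phi x * phi y) &
      exists x, in_E mul e x /\ phi x <> 0].

From Pilot Require Import Defs.
From HB Require Import structures.
From mathcomp Require Import all_boot all_algebra.
From mathcomp Require Import boolp classical_sets.
Import GRing.Theory.
Local Open Scope classical_set_scope.
Local Open Scope ring_scope.
Set Implicit Arguments. Unset Strict Implicit.

(* Conjugating by a generator word is a map on ideals: for
   s = v_{p1}^* v_{q1} ... v_{pn}^* v_{qn} one has s^* e_X s = e_{s^{-1}.X}, where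
   s^{-1}.X is obtained from X by applying Y |-> q^{-1}(pY) for each letter (p, q).
   Each such map preserves constructibility and unions, and, by left cancellation,
   intersections; so the identity for s is the hypothesis applied to s^{-1}.X and
   s^{-1}.Y. *)

Section WordConjugation.

Variables (P : Type) (mul : P -> P -> P) (one : P).
Hypothesis mul1p : forall a, mul one a = a.
Hypothesis mulpI : forall a b c, mul a b = mul a c -> b = c.

Lemma lpre1 Y : lpre mul one Y = Y.
Proof. by apply/funext=> x; rewrite /lpre /= mul1p. Qed.

Lemma limg1 Y : Defs.limg mul one Y = Y.
Proof.
apply/seteqP; split=> x /=; first by case=> z Yz <-; rewrite mul1p.
by move=> Yx; exists x; rewrite ?mul1p.
Qed.

Lemma limg_set0 p : Defs.limg mul p set0 = set0.
Proof. by apply/seteqP; split=> x // [z]. Qed.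

Lemma limgU p X Y :
  Defs.limg mul p (X `|` Y) = Defs.limg mul p X `|` Defs.limg mul p Y.
Proof.
apply/seteqP; split=> x /=.
- by case=> z [Xz|Yz] <-; [left|right]; exists z.
- by case=> -[z Hz <-]; exists z => //; [left|right].
Qed.

Lemma limgI p X Y :
  Defs.limg mul p (X `&` Y) = Defs.limg mul p X `&` Defs.limg mul p Y.
Proof.
apply/seteqP; split=> x /=; first by case=> z [Xz Yz] <-; split; exists z.
by case=> -[z Xz <-] [z' Yz' /mulpI zz']; exists z => //; split; rewrite // -zz'.
Qed.

Lemma lpre_limg_setT q X :
  X `&` Defs.limg mul q setT = Defs.limg mul q (lpre mul q X).
Proof.
apply/seteqP; split=> x /=; first by case=> Xx [z _ qz]; exists z; rewrite // /lpre /= qz.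
by case=> z Xqz <-; split; last exists z.
Qed.

Lemma setI_lpre_limg p q X W :
  X `&` lpre mul p (Defs.limg mul q W) =
  lpre mul p (Defs.limg mul q (lpre mul q (Defs.limg mul p X) `&` W)).
Proof.
apply/seteqP; split=> x /=.
- by case=> Xx [y Wy qy]; exists y => //; split => //; rewrite /lpre /= qy; exists x.
- case=> y [[x' Xx' px'] Wy] qy; split; last by exists y.
  by rewrite qy in px'; rewrite -(mulpI px').
Qed.

Lemma constructible_limg p X :
  constructible mul X -> constructible mul (Defs.limg mul p X).
Proof.
case=> [->|[w [_ ->]]]; first by left; rewrite limg_set0.
by right; exists ((one, p) :: w); split => //=; rewrite lpre1.
Qed.

Lemma constructible_lpre p X :
  constructible mul X -> constructible mul (lpre mul p X).
Proof.
case=> [->|[w [_ ->]]]; first by left.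
by right; exists ((p, one) :: w); split => //=; rewrite limg1.
Qed.

Lemma constructible_setT : constructible mul setT.
Proof. by right; exists [:: (one, one)]; split => //=; rewrite limg1 lpre1. Qed.

Lemma constructible_setI_word_ideal w X :
  constructible mul X -> constructible mul (X `&` word_ideal mul w).
Proof.
elim: w X => [|[p q] w IHw] X cX /=; first by rewrite setIT.
rewrite setI_lpre_limg; apply/constructible_lpre/constructible_limg/IHw.
exact/constructible_lpre/constructible_limg.
Qed.

Lemma constructible_setI X Y :
  constructible mul X -> constructible mul Y -> constructible mul (X `&` Y).
Proof.
move=> cX [->|[w [_ ->]]]; first by left; rewrite setI0.
exact: constructible_setI_word_ideal.
Qed.

Fixpoint word_conj (w : seq (P * P)) (X : set P) : set P :=
  if w is (p, q) :: w' then word_conj w' (lpre mul q (Defs.limg mul p X)) else X.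

Lemma constructible_word_conj w X :
  constructible mul X -> constructible mul (word_conj w X).
Proof.
elim: w X => [//|[p q] w IHw] X cX /=.
exact/IHw/constructible_lpre/constructible_limg.
Qed.

Lemma word_conjU w X Y : word_conj w (X `|` Y) = word_conj w X `|` word_conj w Y.
Proof. by elim: w X Y => [//|[p q] w IHw] X Y /=; rewrite limgU IHw. Qed.

Lemma word_conjI w X Y : word_conj w (X `&` Y) = word_conj w X `&` word_conj w Y.
Proof. by elim: w X Y => [//|[p q] w IHw] X Y /=; rewrite limgI IHw. Qed.

Variables (R : nzRingType) (star : R -> R) (v : P -> R) (e : set P -> R).
Hypothesis hrel : Cstar_P_relations mul star v e.

Lemma star1 : star 1 = 1.
Proof.
have [starM [starK _]] := hrel.
by rewrite -[star 1]mulr1 -{2}(starK 1) -starM mulr1 starK.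
Qed.

(* v_q = e_{qP} v_q, and e_X e_{qP} = e_{q (q^{-1} X)} = v_q e_{q^{-1} X} v_q^*. *)
Lemma conj_isometry q X :
  constructible mul X -> star (v q) * e X * v q = e (lpre mul q X).
Proof.
have [_ [_ [_ [vK [_ [_ [conj_v [_ [e_setT e_setI]]]]]]]]] := hrel.
move=> cX; have cT := constructible_setT.
have vqE : v q = e (Defs.limg mul q setT) * v q.
  by rewrite -conj_v // e_setT mulr1 -mulrA vK mulr1.
rewrite {2}vqE mulrA -(mulrA _ (e X)) e_setI //; last exact: constructible_limg.
rewrite lpre_limg_setT -conj_v; last exact: constructible_lpre.
by rewrite !mulrA vK mul1r -mulrA vK mulr1.
Qed.

Lemma word_elt_conj w X :
  constructible mul X ->
  star (word_elt star v w) * e X * word_elt star v w = e (word_conj w X).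
Proof.
have [starM [starK _]] := hrel.
have [_ [_ [_ [_ [_ [_ [conj_v _]]]]]]] := hrel.
elim: w X => [|[p q] w IHw] X cX /=; first by rewrite star1 mul1r mulr1.
rewrite !starM starK -IHw; last exact/constructible_lpre/constructible_limg.
rewrite -(conj_isometry q (constructible_limg p cX)) -(conj_v p X cX).
by rewrite !mulrA.
Qed.

End WordConjugation.

Theorem mainTheorem2 (P : countType) (mul : P -> P -> P) (one : P)
  (R : nzRingType) (star : R -> R) (v : P -> R) (e : set P -> R)
  (hP : unital_left_cancellative mul one)
  (hrel : Cstar_P_relations mul star v e)
  (s : R) (hs : in_S star v s)
  (phi : R -> int) (hphi : in_spectrum mul e phi)
  (hadd : forall X Y, constructible mul X -> constructible mul Y ->
     constructible mul (X `|` Y) ->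
     phi (e (X `|` Y)) = phi (e X) + phi (e Y) - phi (e (X `&` Y))) :
  forall X Y, constructible mul X -> constructible mul Y ->
     constructible mul (X `|` Y) ->
     phi (star s * e (X `|` Y) * s) =
       phi (star s * e X * s) + phi (star s * e Y * s) - phi (star s * e (X `&` Y) * s).
Proof.
move=> X Y cX cY cXY.
have [_ [mul1p [_ mulpI]]] := hP.
case: hs => [->|[w [_ ->]]].
  by case: hphi => _ phi0 _ _; rewrite !mulr0 phi0.
have cXIY := constructible_setI mul1p mulpI cX cY.
rewrite !(word_elt_conj mul1p hrel) // word_conjU word_conjI //.
by apply: hadd; rewrite -?word_conjU; apply: constructible_word_conj.
Qed.
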